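(* For every $n\ge 1$: (a) the number of Dyck paths $D$ of semilength $n$ such that $\mathcal N\cap\mathcal D\subseteq\mathcal F$ equals the number of Motzkin paths of length $n$; (b) the number of Dyck paths $D$ of semilength $n$ such that $\mathcal N\cap\mathcal D=\emptyset$ equals the number of Riordan paths of length $n$.
   Context: Work in an $n\times n$ array of unit cells; the cell $(i,j)$ is the one in column $i$ (columns numbered $1,\dots,n$ from left to right) and row $j$ (rows numbered $1,\dots,n$ from bottom to top). A Dyck path of semilength $n$ is a lattice path from $(0,0)$ to $(n,n)$ with unit north and east steps that never goes below the line $y=x$. Row-area sequence: $r_0=-1$ and, for $1\le k\le n$, $r_k=k-1-x_k$ where $x_k$ is the $x$-coordinate of the $k$-th north step (the number of full cells in row $k$ strictly between the path and the diagonal). Column-area sequence: for $1\le k\le n$, $c_k=y_k-k$ where $y_k$ is the height of the $k$-th east step (the number of full cells in column $k$ strictly between the path and the diagonal), and $c_{n+1}=-1$. A valley of $D$ is an east step immediately followed by a north step; if the east step is the $k$-th east step and the north step is the $\ell$-th north step, the valley is at position $(k,\ell)$ (column $k$, row $\ell$). Define: $\mathcal D=\{k\in\{1,\dots,n\}: c_{k+1}=c_k-1\}$; $\mathcal F=\{k\in\{1,\dots,n\}: r_{k+1+c_{k+1}}=r_{k-1}+c_{k+1}+2\}$; $\mathcal N$ = the set of $k\in\{1,\dots,n\}$ such that row $k$ contains no valley of $D$. A Motzkin path of length $n$ is a lattice path from $(0,0)$ to $(n,0)$ with steps $(1,1)$, $(1,-1)$, $(1,0)$ never going below the $x$-axis;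 a Riordan path is a Motzkin path with no level step $(1,0)$ at height zero. *)

From mathcomp Require Import all_boot all_order all_algebra.
Set Implicit Arguments. Unset Strict Implicit. Unset Printing Implicit Defensive.
Import GRing.Theory Num.Theory.
Local Open Scope ring_scope.

(* A lattice path is a seq bool: true = north step, false = east step. *)

(* 0-based position in s of the k-th (1-based) occurrence of b. *)
Definition kth_pos (b : bool) (s : seq bool) (k : nat) : nat :=
  nth 0%N [seq i <- iota 0 (size s) | nth (~~ b) s i == b] k.-1.

Definition is_dyck (n : nat) (s : seq bool) : bool :=
  [&& size s == (2 * n)%N, count_mem true s == n &
      all (fun i => count_mem false (take i s) <= count_mem true (take i s))%N
          (iota 0 (size s).+1)].

Definition xcoord (s : seq bool) (k : nat) : nat :=
  count_mem false (take (kth_pos true s k) s).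
Definition ycoord (s : seq bool) (k : nat) : nat :=
  count_mem true (take (kth_pos false s k) s).

Definition rarea (s : seq bool) (k : nat) : int :=
  if k is k'.+1 then k'%:Z - (xcoord s k)%:Z else -1.

Definition carea (n : nat) (s : seq bool) (k : nat) : int :=
  if (1 <= k <= n)%N then (ycoord s k)%:Z - k%:Z else -1.

Definition inD (n : nat) (s : seq bool) (k : nat) : bool :=
  carea n s k.+1 == carea n s k - 1.

Definition inF (n : nat) (s : seq bool) (k : nat) : bool :=
  rarea s (absz ((k.+1)%:Z + carea n s k.+1)) == rarea s k.-1 + carea n s k.+1 + 2.

(* row k contains a valley iff the k-th north step is immediately preceded
   by an east step. *)
Definition row_has_valley (s : seq bool) (k : nat) : bool :=
  let p := kth_pos true s k in (0 < p)%N && (nth true s p.-1 == false).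

Definition inN (s : seq bool) (k : nat) : bool := ~~ row_has_valley s k.

(* Motzkin steps encoded in 'I_3: 0 = up (1,1), 1 = down (1,-1), 2 = level. *)
Definition mstep (x : 'I_3) : int :=
  if val x == 0%N then 1 else if val x == 1%N then -1 else 0.

Definition mheight (s : seq 'I_3) : int := foldr (fun x h => mstep x + h) 0 s.

Definition is_motzkin (s : seq 'I_3) : bool :=
  (mheight s == 0) &&
  all (fun i => 0 <= mheight (take i s)) (iota 0 (size s).+1).

Definition is_riordan (s : seq 'I_3) : bool :=
  is_motzkin s &&
  all (fun i => ~~ ((val (nth ord0 s i) == 2%N) && (mheight (take i s) == 0)))
      (iota 0 (size s)).

(* Encode a Dyck path of semilength n by the abscissae 0 = x_0 <= x_1 <= ...
   <= x_n of its north steps, x_k < k.  Row k has a valley iff x_k <> x_(k-1)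
   (a "rise"), and k lies outside \mathcal D iff k = x_j for some j (a
   "value").  Read k = 1, ..., n as a word: value only gives an up step, rise
   only a down step, both or neither a level step.  After k letters the height
   is the number of values in (x_k, k], which is nonnegative and vanishes at
   k = n; an index with both properties sits at positive height, and for an
   index with neither, k \in \mathcal F says exactly that the height before k
   is zero.  So when \mathcal N \cap \mathcal D \subseteq \mathcal F, the word
   is a Motzkin path whose level steps are "both" at positive height and
   "neither" at height zero, and conversely every Motzkin path decodes this
   way (x_k is the least v having as many values up to v as rises up to k).
   Forbidding "neither" altogether removes the level steps at height zero,
   which leaves the Riordan paths. *)

From mathcomp Require Import all_boot all_order all_algebra.
From mathcomp Require Import zify.

Set Implicit Arguments.
Unset Strict Implicit.
Unset Printing Implicit Defensive.
Import GRing.Theory Num.Theory.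

Section SeqFacts.

Lemma count_take_mono (T : Type) (a : pred T) s m m' : m <= m' ->
  count a (take m s) <= count a (take m' s).
Proof. by move/subnKC <-; rewrite takeD count_cat leq_addr. Qed.

Lemma count_true_false (s : seq bool) : count_mem true s + count_mem false s = size s.
Proof. by elim: s => //= -[] s /= <-; rewrite ?addnS. Qed.

Lemma iotaS1 m : iota 1 m.+1 = iota 1 m ++ [:: m.+1].
Proof. by have := iotaD 1 m 1; rewrite addn1 add1n. Qed.

Lemma count_iota1S (a : pred nat) m : count a (iota 1 m.+1) = count a (iota 1 m) + a m.+1.
Proof. by rewrite iotaS1 count_cat /= addn0. Qed.

Lemma count_iota_downclosed (p : pred nat) n :
  (forall j j', 0 < j -> j <= j' -> j' <= n -> p j' -> p j) ->
  forall j, 0 < j <= n -> p j = (j <= count p (iota 1 n)).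
Proof.
elim: n => [|n IH] hd j hj; first lia.
rewrite count_iota1S.
have hd' : forall j j', 0 < j -> j <= j' -> j' <= n -> p j' -> p j.
  by move=> a b ha hab hb; apply: hd => //; lia.
case hp : (p n.+1).
  have -> : count p (iota 1 n) = n.
    rewrite -[RHS](size_iota 1 n); apply/eqP; rewrite -all_count; apply/allP => a.
    rewrite mem_iota => ha; apply: (hd a n.+1) => //; lia.
  rewrite (hd j n.+1) //; change (nat_of_bool true) with 1; lia.
change (nat_of_bool false) with 0; rewrite addn0.
case: (ltngtP j n.+1) => hjn; [by apply: IH => //; lia | lia |].
rewrite hjn hp; have := count_size p (iota 1 n); rewrite size_iota; lia.
Qed.

Lemma find_iota (p : pred nat) N w : (w < N)%N -> p w ->
  let v := find p (iota 0 N) in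
  [/\ (v <= w)%N, p v & forall u, (u < v)%N -> ~~ p u].
Proof.
move=> wN pw v.
have hh : has p (iota 0 N) by apply/hasP; exists w; rewrite ?mem_iota.
have vN : (v < N)%N by rewrite -(size_iota 0 N) -has_find.
have pv : p v by have := nth_find 0 hh; rewrite nth_iota.
have bef : forall u, (u < v)%N -> ~~ p u.
  move=> u uv; have := before_find 0 uv; rewrite nth_iota ?add0n => [->//|]; lia.
split => //; rewrite leqNgt; apply/negP => /bef; by rewrite pw.
Qed.

Lemma find_iota_eq (p : pred nat) N v : (v < N)%N -> p v ->
  (forall u, (u < v)%N -> ~~ p u) -> find p (iota 0 N) = v.
Proof.
move=> vN pv hb; have [h1 h2 h3] := find_iota vN pv.
apply/eqP; rewrite eqn_leq h1 /= leqNgt; apply/negP => /hb; by rewrite h2.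
Qed.

Lemma nat_ivt (f : nat -> nat) N c : (f 0 <= c <= f N)%N ->
  (forall i, (i < N)%N -> (f i.+1 <= (f i).+1)%N) -> exists2 j, (j <= N)%N & f j = c.
Proof.
elim: N => [|N IH] hc hs; first by exists 0%N => //; lia.
case: (leqP c (f N)) => h.
  have hc' : (f 0 <= c <= f N)%N by lia.
  have [j hj e] := IH hc' (fun i hi => hs i (ltnW hi)).
  by exists j => //; lia.
by exists N.+1 => //; have := hs N (ltnSn N); lia.
Qed.

Lemma sub_in_count (T : eqType) (a1 a2 : pred T) s :
  {in s, forall x, a1 x -> a2 x} -> count a1 s <= count a2 s.
Proof.
move=> h; rewrite (@eq_in_count _ a1 (predI a1 a2)).
  by apply: sub_count => x /andP [].
by move=> x xs /=; case: (boolP (a1 x)) => // /(h x xs) ->.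
Qed.

Lemma path_iota_rel (r : rel nat) a N :
  (forall k, a <= k -> k.+1 < a.+1 + N -> r k k.+1) -> path r a (iota a.+1 N).
Proof.
elim: N a => [//|N IH] a h /=.
rewrite h //; last lia.
apply: IH => k hk hk'; apply: h; lia.
Qed.

Lemma leq_card_cancel_on (T U : finType) (P : pred T) (Q : pred U)
    (f : T -> U) (g : U -> T) :
  (forall x, P x -> Q (f x) /\ g (f x) = x) -> #|P| <= #|Q|.
Proof.
move=> fK; rewrite -(card_in_imset (f := f) (D := P)).
  apply: subset_leq_card; apply/subsetP => _ /imsetP [x Px ->].
  by have [] := fK x Px.
by move=> x y Px Py exy; rewrite -(proj2 (fK x Px)) -(proj2 (fK y Py)) exy.
Qed.

Lemma eq_card_cancel_on (T U : finType) (P : pred T) (Q : pred U)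
    (f : T -> U) (g : U -> T) :
  (forall x, P x -> Q (f x) /\ g (f x) = x) ->
  (forall y, Q y -> P (g y) /\ f (g y) = y) -> #|P| = #|Q|.
Proof.
by move=> fK gK; apply/eqP; rewrite eqn_leq (leq_card_cancel_on fK) (leq_card_cancel_on gK).
Qed.

Lemma val_mktuple_nth (T : Type) (x0 : T) N (s : seq T) : size s = N ->
  val [tuple nth x0 s i | i < N] = s.
Proof.
move=> hs; apply: (@eq_from_nth _ x0); first by rewrite size_tuple.
move=> i; rewrite size_tuple => hi.
by rewrite -(nth_mktuple (fun j : 'I_N => nth x0 s j) x0 (Ordinal hi)).
Qed.

End SeqFacts.

Section PositionsInWords.

Definition positions (b : bool) (s : seq bool) : seq nat :=
  [seq i <- iota 0 (size s) | nth (~~ b) s i == b].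

Lemma kth_posE b s k : kth_pos b s k = nth 0 (positions b s) k.-1.
Proof. by []. Qed.

Lemma positions_cons b a s :
  positions b (a :: s)
  = if a == b then 0 :: map succn (positions b s) else map succn (positions b s).
Proof.
rewrite /positions /=.
have -> : [seq i <- iota 1 (size s) | nth (~~ b) (a :: s) i == b]
        = map succn [seq i <- iota 0 (size s) | nth (~~ b) s i == b].
  by rewrite -(addn0 1) iotaDl filter_map; congr map; apply: eq_filter => i.
by case: (a == b).
Qed.

Lemma size_positions b s : size (positions b s) = count_mem b s.
Proof.
elim: s => [//|a s IH]; rewrite positions_cons /=.
by case: (a == b) => /=; rewrite size_map IH // eq_sym; case: eqP.
Qed.


Lemma nth_positions b s j : j < size (positions b s) ->
  [/\ nth 0 (positions b s) j < size s, nth (~~ b) s (nth 0 (positions b s) j) = b &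
      count_mem b (take (nth 0 (positions b s) j) s) = j].
Proof.
elim: s j => [//|a s IH] j; rewrite positions_cons.
case: eqP => [eab|nab].
  subst a.
  case: j => [|j] /=; first by move=> _; split.
  rewrite ltnS size_map => hj; have [h1 h2 h3] := IH _ hj.
  by rewrite (nth_map 0) //= h3 eqxx h2 ltnS h1.
rewrite size_map => hj; have [h1 h2 h3] := IH _ hj.
rewrite (nth_map 0) //= h2 ltnS h1 h3; split => //.
by case: eqP => // e; case: nab; rewrite e.
Qed.

Lemma sorted_positions b s : sorted ltn (positions b s).
Proof. exact: sorted_filter ltn_trans _ _ (iota_ltn_sorted 0 _). Qed.

Lemma mem_positions b s i : (i \in positions b s) = (i < size s) && (nth (~~ b) s i == b).
Proof. by rewrite mem_filter mem_iota add0n andbC. Qed.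

Lemma count_take_positions b s q :
  count_mem b (take q s) = count (fun p => p < q) (positions b s).
Proof.
elim: s q => [|a s IH] q; first by case: q.
case: q => [|q].
  rewrite take0 positions_cons; case: (a == b) => //=; rewrite count_map;
  by apply/esym/eqP; rewrite -leqn0 leqNgt -has_count; apply/hasP=> -[].
rewrite /= positions_cons IH; case: eqP => [<-|nab] /=; rewrite count_map //=.
Qed.

Lemma dyckP n s : is_dyck n s ->
  [/\ size s = 2 * n, count_mem true s = n, count_mem false s = n &
      forall i, i <= size s -> count_mem false (take i s) <= count_mem true (take i s)].
Proof.
case/and3P => /eqP hs /eqP ht /allP ha; split => //.
  have h := count_predC (pred1 true) s.
  have -> : count_mem false s = count (predC (pred1 true)) s by apply: eq_count => -[].
  rewrite hs in h; rewrite ht in h; lia.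
by move=> i hi; apply: ha; rewrite mem_iota ltnS.
Qed.

Lemma north_step_spec n s k : is_dyck n s -> 0 < k <= n ->
  let p := kth_pos true s k in
  [/\ p < 2 * n, nth false s p = true, count_mem true (take p s) = k.-1 &
      p = k.-1 + xcoord s k].
Proof.
move=> hd /andP [k0 kn] p; have [hs ht hf hpre] := dyckP hd.
have hk : k.-1 < size (positions true s) by rewrite size_positions ht; lia.
have [h1 h2 h3] := nth_positions hk.
rewrite /p kth_posE -hs h1 h2 h3; split => //.
have := count_true_false (take (nth 0 (positions true s) k.-1) s).
rewrite /xcoord kth_posE size_take h1 h3; lia.
Qed.

Lemma xcoord_lt n s k : is_dyck n s -> 0 < k <= n -> xcoord s k < k.
Proof.
move=> hd hk; have [hs ht hf hpre] := dyckP hd.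
have [h1 h2 h3 h4] := north_step_spec hd hk.
have := hpre (kth_pos true s k); rewrite -/(xcoord s k) h3 hs => /(_ (ltnW h1)).
lia.
Qed.

Lemma xcoord_mono n s i j : is_dyck n s -> 0 < i -> i <= j -> j <= n ->
  xcoord s i <= xcoord s j.
Proof.
move=> hd i0 ij jn.
have [hs ht hf hpre] := dyckP hd.
rewrite /xcoord !kth_posE; apply: count_take_mono.
case: (ltngtP i j) => [lij||->//]; last lia.
apply: ltnW; apply: (sorted_ltn_nth ltn_trans 0 (sorted_positions true s)); last lia;
  rewrite !inE size_positions ht; lia.
Qed.

Lemma east_step_spec n s i : is_dyck n s -> 0 < i <= n ->
  let q := kth_pos false s i in
  [/\ q < 2 * n, nth true s q = false & count_mem false (take q s) = i.-1].
Proof.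
move=> hd /andP [k0 kn] q; have [hs ht hf hpre] := dyckP hd.
have hk : i.-1 < size (positions false s) by rewrite size_positions hf; lia.
have [h1 h2 h3] := nth_positions hk.
by rewrite /q kth_posE -hs h1 h2 h3.
Qed.

Lemma north_before_east n s i j : is_dyck n s -> 0 < i <= n -> 0 < j <= n ->
  (kth_pos true s j < kth_pos false s i) = (xcoord s j < i).
Proof.
move=> hd hi hj.
have [hs ht hf hpre] := dyckP hd.
have [q1 q2 q3] := east_step_spec hd hi.
have [p1 p2 p3 p4] := north_step_spec hd hj.
case: (ltngtP (kth_pos true s j) (kth_pos false s i)) => h.
- apply/esym; rewrite /xcoord.
  have := count_take_mono (pred1 false) s (ltnW h); rewrite q3 => H.
  apply: leq_ltn_trans H _; rewrite ltn_predL; by case/andP: hi.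
- apply/esym/negbTE; rewrite -leqNgt /xcoord.
  have := count_take_mono (pred1 false) s h.
  rewrite (take_nth true); last by rewrite hs.
  by rewrite -cats1 count_cat q3 /= q2; lia.
- by move: p2; rewrite h (set_nth_default true) ?q2 // hs.
Qed.

Lemma positions_true_dyck n t : is_dyck n t -> positions true t = map (kth_pos true t) (iota 1 n).
Proof.
move=> hd; have [hs ht hf hpre] := dyckP hd.
rewrite -(addn0 1) iotaDl -map_comp.
have := map_nth_iota0 0 (leqnn (size (positions true t))).
rewrite take_size size_positions ht => {1}<-; by apply: eq_map.
Qed.

Lemma ycoordE n s i : is_dyck n s -> 0 < i <= n ->
  ycoord s i = count (fun j => xcoord s j < i) (iota 1 n).
Proof.
move=> hd hi; have [hs ht hf hpre] := dyckP hd.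
rewrite /ycoord count_take_positions (positions_true_dyck hd) count_map.
apply: eq_in_count => j; rewrite mem_iota => hj.
apply: north_before_east => //; lia.
Qed.

Lemma row_has_valleyE n s k : is_dyck n s -> 0 < k <= n ->
  row_has_valley s k = (xcoord s k != xcoord s k.-1).
Proof.
move=> hd hk; have [hs ht hf hpre] := dyckP hd.
have [p1 p2 p3 p4] := north_step_spec hd hk.
have xl := xcoord_lt hd hk.
case: k hk p1 p2 p3 p4 xl => [//|[|k]] hk p1 p2 p3 p4 xl.
  rewrite eqxx /row_has_valley p4; move: xl; rewrite ltnS leqn0 => /eqP ->.
  by [].
have hk' : 0 < k.+1 <= n by lia.
have [p1' p2' p3' p4'] := north_step_spec hd hk'.
have xm := xcoord_mono hd (isT : 0 < k.+1) (leqnSn _) (proj2 (andP hk)).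
set p := kth_pos true s k.+2 in p1 p2 p3 p4 *.
set p' := kth_pos true s k.+1 in p1' p2' p3' p4' xm *.
rewrite /row_has_valley -/p /=.
have pp : p' < p by lia.
have pp1 : p.-1 < size s by rewrite hs; lia.
have e1 := take_nth true pp1; rewrite prednK in e1; last lia.
have c1 := count_true_false (take p.-1 s); rewrite size_take pp1 in c1.
have c2 := count_true_false (take p' s); rewrite size_take hs p1' in c2.
case hn : (nth true s p.-1) => /=.
  have hx : count_mem true (take p.-1 s) = k by move: p3; rewrite e1 -cats1 count_cat hn /=; lia.
  have : p' = p.-1.
    apply/eqP; rewrite eqn_leq -ltnS prednK ?pp //=; last lia.
    rewrite leqNgt; apply/negP => hlt.
    have := count_take_mono (pred1 true) s hlt.
    rewrite (take_nth false) ?hs // -cats1 count_cat p2' p3' hx /=; lia.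
  move=> e; rewrite andbF; suff -> : xcoord s k.+2 = xcoord s k.+1 by rewrite eqxx.
  rewrite /xcoord -/p -/p' e1 -cats1 count_cat hn e /=; lia.
have p0 : 0 < p by lia.
rewrite p0 /=.
have E2 : count_mem false (take p s) = count_mem false (take p.-1 s) + 1.
  by rewrite e1 -cats1 count_cat hn.
have hle : p' <= p.-1 by lia.
have := count_take_mono (pred1 false) s hle => h1.
by apply/esym/eqP; rewrite /xcoord -/p -/p' E2 => E; move: h1; rewrite -E addn1 ltnn.
Qed.


End PositionsInWords.

Section XSequences.

(* [xs = (x_0, ..., x_n)] lists the abscissae of the north steps, [x_0 = 0];
   at [k = 0], [nth 0 xs k.-1] is [x_0] itself. *)
Definition is_xval n (xs : seq nat) k := has (fun j => nth 0 xs j == k) (iota 1 n).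
Definition nxval n xs v := count (is_xval n xs) (iota 1 v).
Definition xrise (xs : seq nat) k := nth 0 xs k != nth 0 xs k.-1.
Definition nrise xs k := count (xrise xs) (iota 1 k).
Definition nbelow n (xs : seq nat) i := count (fun j => nth 0 xs j < i) (iota 1 n).

Definition is_xseq n (xs : seq nat) :=
  [/\ nth 0 xs 0 = 0, forall k, 0 < k <= n -> nth 0 xs k < k &
      forall k, k < n -> nth 0 xs k <= nth 0 xs k.+1].

Lemma xseq_mono n xs i j : is_xseq n xs -> i <= j -> j <= n -> nth 0 xs i <= nth 0 xs j.
Proof.
move=> [_ _ hm] ij; elim: j ij => [|j IH]; first by rewrite leqn0 => /eqP ->.
rewrite leq_eqVlt => /orP [/eqP ->//|]; rewrite ltnS => ij jn.
exact: leq_trans (IH ij (ltnW jn)) (hm _ jn).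
Qed.

Lemma nxval_mono n xs a b : a <= b -> nxval n xs a <= nxval n xs b.
Proof. by move/subnKC <-; rewrite /nxval iotaD count_cat leq_addr. Qed.

Lemma nxval_const n xs a b : a <= b -> (forall v, a < v <= b -> ~~ is_xval n xs v) ->
  nxval n xs b = nxval n xs a.
Proof.
elim: b => [|b IH]; first by rewrite leqn0 => /eqP ->.
rewrite leq_eqVlt => /orP [/eqP ->//|]; rewrite ltnS => ab h.
rewrite /nxval count_iota1S -/(nxval n xs b) IH //; last by move=> v hv; apply: h; lia.
by rewrite (negbTE (h b.+1 _)) ?addn0 //; lia.
Qed.

Lemma is_xval_x n xs k : 0 < k <= n -> is_xval n xs (nth 0 xs k).
Proof. by move=> hk; apply/hasP; exists k => //; rewrite mem_iota; lia. Qed.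

Lemma is_xvalP n xs v : reflect (exists2 j, 0 < j <= n & nth 0 xs j = v) (is_xval n xs v).
Proof.
apply: (iffP hasP) => [[j]|[j hj <-]].
  by rewrite mem_iota => hj /eqP <-; exists j => //; lia.
by exists j; rewrite ?mem_iota //; lia.
Qed.

Lemma nxval_val n xs v : 0 < v -> is_xval n xs v -> nxval n xs v = (nxval n xs v.-1).+1.
Proof. by case: v => // v _ h; rewrite /nxval count_iota1S h addn1. Qed.

Lemma no_xval_between n xs k v : is_xseq n xs -> k < n ->
  nth 0 xs k < v < nth 0 xs k.+1 -> ~~ is_xval n xs v.
Proof.
move=> hv kn hkv; apply/is_xvalP => -[j hj e].
case: (leqP j k) => jk.
  have := xseq_mono hv jk (ltnW kn); lia.
have := xseq_mono hv jk (proj2 (andP hj)); lia.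
Qed.

Lemma nxval_x n xs k : is_xseq n xs -> k <= n -> nxval n xs (nth 0 xs k) = nrise xs k.
Proof.
move=> hv; have [h0 hl hm] := hv.
elim: k => [|k IH] hk; first by rewrite h0.
rewrite /nrise count_iota1S -/(nrise xs k) -IH ?(ltnW hk) // /xrise /=.
case: eqP => [->|ne]; first by rewrite addn0.
have lt : nth 0 xs k < nth 0 xs k.+1 by have := hm k hk; lia.
rewrite nxval_val ?is_xval_x //; last lia.
rewrite (nxval_const (a := nth 0 xs k)) ?addn1 //; first lia.
move=> v hv'; apply: (no_xval_between hv hk); lia.
Qed.

Lemma nxval_top n xs : is_xseq n xs -> nxval n xs n = nxval n xs (nth 0 xs n).
Proof.
move=> hv; have [h0 hl hm] := hv.
have xn : nth 0 xs n <= n.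
  case: n hv hl {hm} => [|n] hv hl; first by rewrite h0.
  by apply: ltnW; apply: hl; lia.
apply: nxval_const => // v hv'; apply/is_xvalP => -[j hj e].
have := xseq_mono hv (proj2 (andP hj)) (leqnn n); lia.
Qed.

Lemma nxval_lt_rise n xs k : is_xseq n xs -> 0 < k <= n -> xrise xs k ->
  nxval n xs (nth 0 xs k.-1) < nxval n xs k.-1.
Proof.
move=> hv hk hr; have [h0 hl hm] := hv.
have hk1 : k.-1 < n by lia.
have lt : nth 0 xs k.-1 < nth 0 xs k.
  have := hm _ hk1; rewrite prednK; last lia.
  by move: hr; rewrite /xrise; lia.
have := hl k hk => hxk.
have := nxval_mono n xs (_ : nth 0 xs k <= k.-1) => /(_ ltac:(lia)).
rewrite nxval_val ?is_xval_x //; last lia.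
have := nxval_mono n xs (_ : nth 0 xs k.-1 <= (nth 0 xs k).-1) => /(_ ltac:(lia)).
lia.
Qed.

Lemma xseq_lt_nbelow n xs i j : is_xseq n xs -> 0 < j <= n ->
  (nth 0 xs j < i) = (j <= nbelow n xs i).
Proof.
move=> hv hj; apply: (count_iota_downclosed (p := fun j => nth 0 xs j < i)) => //.
move=> a b ha hab hb /=; have := xseq_mono hv hab hb; lia.
Qed.

Lemma nbelowS n xs k :
  nbelow n xs k.+1 = nbelow n xs k + count (fun j => nth 0 xs j == k) (iota 1 n).
Proof.
rewrite /nbelow -count_predUI.
rewrite (eq_count (a1 := predI _ _) (a2 := pred0)); last by move=> j /=; lia.
rewrite count_pred0 addn0; apply: eq_count => j /=; lia.
Qed.

Lemma nbelowS_nval n xs k : ~~ is_xval n xs k -> nbelow n xs k.+1 = nbelow n xs k.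
Proof. by rewrite nbelowS /is_xval has_count -eqn0Ngt => /eqP ->; rewrite addn0. Qed.

Lemma nbelow_le n xs i : nbelow n xs i <= n.
Proof. by have := count_size (fun j => nth 0 xs j < i) (iota 1 n); rewrite size_iota. Qed.

Lemma nbelow_ge n xs k : is_xseq n xs -> 0 < k <= n -> k <= nbelow n xs k.
Proof. move=> hv hk; rewrite -xseq_lt_nbelow //; have [_ hl _] := hv; exact: hl. Qed.

Lemma nbelow_top n xs : is_xseq n xs -> nbelow n xs n.+1 = n.
Proof.
move=> hv; have [h0 hl hm] := hv.
rewrite /nbelow -[RHS](size_iota 1 n); apply/eqP; rewrite -all_count; apply/allP => a.
rewrite mem_iota => ha /=; have := hl a; lia.
Qed.

Lemma x_nbelow_eqE n xs k : is_xseq n xs -> 0 < k <= n -> ~~ is_xval n xs k ->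
  (nth 0 xs (nbelow n xs k.+1) == nth 0 xs k.-1) =
  (nxval n xs k.-1 == nxval n xs (nth 0 xs k.-1)).
Proof.
move=> hv hk hc; have [h0 hl hm] := hv.
rewrite nbelowS_nval //; set Y := nbelow n xs k.
have kY : k <= Y by apply: nbelow_ge.
have Yn : Y <= n by apply: nbelow_le.
have xY : nth 0 xs Y < k by rewrite (xseq_lt_nbelow k hv) //; lia.
have xkY : nth 0 xs k.-1 <= nth 0 xs Y by apply: (xseq_mono hv); lia.
have xk1 : nth 0 xs k.-1 <= k.-1.
  case: (posnP k.-1) => [->|kp]; first by rewrite h0.
  by have := hl k.-1; lia.
apply/eqP/eqP => [e|e].
  apply: nxval_const => // v hv'; apply/is_xvalP => -[j hj ej].
  case: (leqP j k.-1) => jk.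
    have := xseq_mono hv jk (_ : k.-1 <= n) => /(_ ltac:(lia)); lia.
  have : j <= Y by rewrite -xseq_lt_nbelow //; lia.
  move/(xseq_mono hv) => /(_ Yn); lia.
apply/eqP; rewrite eqn_leq xkY andbT leqNgt; apply/negP => lt.
have := nxval_mono n xs (_ : nth 0 xs Y <= k.-1) => /(_ ltac:(lia)).
rewrite nxval_val; [|lia|apply: is_xval_x; lia].
have := nxval_mono n xs (_ : nth 0 xs k.-1 <= (nth 0 xs Y).-1) => /(_ ltac:(lia)).
lia.
Qed.

End XSequences.

Section MotzkinWords.
Local Open Scope ring_scope.

Definition pheight (m : seq 'I_3) k := mheight (take k m).
Definition letter (m : seq 'I_3) k : nat := val (nth ord0 m k.-1).
(* Decoding of letter [k]: whether it marks a value ([mcol]) or a rise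
   ([mrow]); a level letter marks both at positive height, neither at 0. *)
Definition mcol m k := (letter m k == 0)%N || ((letter m k == 2)%N && (0 < pheight m k.-1)).
Definition mrow m k := (letter m k == 1)%N || ((letter m k == 2)%N && (0 < pheight m k.-1)).
Definition nmcol m v := count (mcol m) (iota 1 v).
Definition nmrow m k := count (mrow m) (iota 1 k).

Lemma mheight_cat s t : mheight (s ++ t) = mheight s + mheight t.
Proof. by elim: s => [|a s IH] /=; rewrite ?add0r // IH addrA. Qed.

Lemma pheightS m k : (k < size m)%N -> pheight m k.+1 = pheight m k + mstep (nth ord0 m k).
Proof.
move=> hk; rewrite /pheight (take_nth ord0 hk) -cats1 mheight_cat /mheight /= addr0 //.
Qed.

Lemma letter_lt m k : (letter m k < 3)%N.
Proof. exact: ltn_ord. Qed.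

Lemma pheight_count m k : (k <= size m)%N -> pheight m k = (nmcol m k)%:Z - (nmrow m k)%:Z.
Proof.
elim: k => [|k IH] hk; first by rewrite /pheight take0 /nmcol /nmrow /= subrr.
rewrite pheightS // IH ?(ltnW hk) // /nmcol /nmrow !count_iota1S -/(nmcol m k) -/(nmrow m k).
rewrite /mcol /mrow /letter /= /mstep.
case: (nth ord0 m k) => -[|[|[|?]]] //= _; rewrite ?PoszD; try lia.
Qed.

Lemma motzkinP m : is_motzkin m ->
  pheight m (size m) = 0 /\ forall k, (k <= size m)%N -> 0 <= pheight m k.
Proof.
case/andP => /eqP h /allP ha; split; first by rewrite /pheight take_size.
by move=> k hk; apply: ha; rewrite mem_iota.
Qed.

Lemma mrow_pheight_pos m k : is_motzkin m -> (0 < k <= size m)%N -> mrow m k -> 0 < pheight m k.-1.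
Proof.
move=> hm hk; have [he hn] := motzkinP hm.
have hk1 : (k.-1 < size m)%N by lia.
have := hn _ (proj2 (andP hk)); rewrite -{1}(prednK (_ : (0 < k)%N)); last lia.
rewrite pheightS // /mrow /letter /mstep.
case: (nth ord0 m k.-1) => -[|[|[|?]]] //= _; try lia.
Qed.

Lemma nmrow_le_nmcol m k : is_motzkin m -> (0 < k <= size m)%N -> (nmrow m k <= nmcol m k.-1)%N.
Proof.
move=> hm hk; have [he hn] := motzkinP hm.
have hk1 : (k.-1 <= size m)%N by lia.
have h1 := pheight_count hk1; have h2 := hn _ hk1.
rewrite /nmrow -(prednK (_ : (0 < k)%N)); last lia.
rewrite count_iota1S -/(nmrow m k.-1) prednK; last lia.
case hr : (mrow m k); last by rewrite addn0; lia.
have := mrow_pheight_pos hm hk hr; rewrite h1; lia.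
Qed.

Lemma nmcol_nmrow_end m : is_motzkin m -> nmcol m (size m) = nmrow m (size m).
Proof. move=> hm; have [he hn] := motzkinP hm; have := pheight_count (leqnn (size m)); lia. Qed.

(* The inverse of [nxval_x], which says [nxval (x_k) = nrise k]. *)
Definition xm m k := find (fun v => nmrow m k <= nmcol m v)%N (iota 0 (size m)).
Definition xseq_of_motzkin m := map (xm m) (iota 0 (size m).+1).

Lemma nth_xseq_of_motzkin m k : (k <= size m)%N -> nth 0%N (xseq_of_motzkin m) k = xm m k.
Proof. by move=> hk; rewrite (nth_map 0%N) ?size_iota ?nth_iota //; lia. Qed.

Lemma nmcolS m v : nmcol m v.+1 = (nmcol m v + mcol m v.+1)%N.
Proof. by rewrite /nmcol count_iota1S. Qed.
Lemma nmrowS m v : nmrow m v.+1 = (nmrow m v + mrow m v.+1)%N.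
Proof. by rewrite /nmrow count_iota1S. Qed.

Lemma nmcol_mono m a b : (a <= b)%N -> (nmcol m a <= nmcol m b)%N.
Proof. by move/subnKC <-; rewrite /nmcol iotaD count_cat leq_addr. Qed.

Lemma xm_spec m k : is_motzkin m -> (0 < size m)%N -> (k <= size m)%N ->
  [/\ (xm m k <= k.-1)%N, nmcol m (xm m k) = nmrow m k &
      forall u, (u < xm m k)%N -> (nmcol m u < nmrow m k)%N].
Proof.
move=> hm n0 hk.
have pw : (nmrow m k <= nmcol m k.-1)%N.
  case: (posnP k) => [->|k0]; first by rewrite /nmrow.
  by apply: nmrow_le_nmcol => //; lia.
have hkn : (k.-1 < size m)%N by lia.
have [h1 h2 h3] := @find_iota (fun v => nmrow m k <= nmcol m v)%N _ _ hkn pw.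
rewrite /xm; split => //; last by move=> u /h3; rewrite -ltnNge.
set v := find _ _ in h1 h2 h3 *.
case: (posnP v) => [v0|vp].
  apply/eqP; rewrite eqn_leq h2 andbT; move: h2; rewrite v0 /nmcol /=; done.
have := h3 v.-1 (_ : (v.-1 < v)%N) => /(_ ltac:(lia)); rewrite -ltnNge => lt.
have := nmcolS m v.-1; rewrite prednK // => e.
apply/eqP; rewrite eqn_leq h2 andbT; move: lt; rewrite e; case: (mcol m v); lia.
Qed.

Lemma nmrow_step m i : (nmrow m i.+1 <= (nmrow m i).+1)%N.
Proof. rewrite nmrowS; case: (mrow m _); lia. Qed.

Lemma xm_mono m k : is_motzkin m -> (0 < size m)%N -> (k < size m)%N ->
  (xm m k <= xm m k.+1)%N.
Proof.
move=> hm n0 hk.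
have [a1 a2 a3] := xm_spec hm n0 (ltnW hk).
have [b1 b2 b3] := xm_spec hm n0 hk.
rewrite leqNgt; apply/negP => /a3; rewrite b2.
have := nmrow_step m k; rewrite nmrowS; case: (mrow m _); lia.
Qed.

Lemma xseq_of_motzkin_valid m : is_motzkin m -> (0 < size m)%N ->
  is_xseq (size m) (xseq_of_motzkin m).
Proof.
move=> hm n0; split.
- rewrite nth_xseq_of_motzkin //; have [h1 _ _] := xm_spec hm n0 (leq0n _); lia.
- move=> k hk; rewrite nth_xseq_of_motzkin; last lia.
  have hk' : (k <= size m)%N by lia.
  have [h1 _ _] := xm_spec hm n0 hk'; lia.
- move=> k hk; rewrite !nth_xseq_of_motzkin ?(ltnW hk) //; exact: xm_mono.
Qed.

Lemma mcol_last m : is_motzkin m -> (0 < size m)%N -> mcol m (size m) = false.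
Proof.
move=> hm n0; have h1 := nmcol_nmrow_end hm.
have hh : (0 < size m <= size m)%N by lia.
have h2 := nmrow_le_nmcol hm hh.
have e := nmcolS m (size m).-1; rewrite prednK // in e.
move: e; case: (mcol m (size m)) => // e; lia.
Qed.

Lemma is_xval_motzkin m v : is_motzkin m -> (0 < size m)%N -> (0 < v <= size m)%N ->
  is_xval (size m) (xseq_of_motzkin m) v = mcol m v.
Proof.
move=> hm n0 hv; apply/is_xvalP/idP => [[j hj]|hc].
  rewrite nth_xseq_of_motzkin; last lia.
  have hj' : (j <= size m)%N by lia.
  have [h1 h2 h3] := xm_spec hm n0 hj' => e.
  rewrite e in h1 h2 h3; have := h3 v.-1 (_ : (v.-1 < v)%N) => /(_ ltac:(lia)).
  have := nmcolS m v.-1; rewrite prednK ?h2; last lia.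
  case: (mcol m v) => //; lia.
have vn : (v < size m)%N.
  rewrite ltn_neqAle; case/andP: hv => _ ->; rewrite andbT.
  by apply/eqP => e; move: hc; rewrite e mcol_last.
have cv : nmcol m v = (nmcol m v.-1).+1.
  by have := nmcolS m v.-1; rewrite prednK ?hc; lia.
have [j hj ej] : exists2 j, (j <= size m)%N & nmrow m j = nmcol m v.
  apply: nat_ivt; last by move=> i _; apply: nmrow_step.
  rewrite /nmrow /= -/(nmrow m (size m)) -(nmcol_nmrow_end hm) nmcol_mono; lia.
exists j.
  by apply/andP; split => //; case: (posnP j) => j0 //; move: ej; rewrite j0 /nmrow cv.
rewrite nth_xseq_of_motzkin // /xm ej; apply: find_iota_eq => // u uv.
rewrite -ltnNge cv ltnS; apply: nmcol_mono; lia.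
Qed.

Lemma xrise_motzkin m k : is_motzkin m -> (0 < size m)%N -> (0 < k <= size m)%N ->
  xrise (xseq_of_motzkin m) k = mrow m k.
Proof.
move=> hm n0 hk; rewrite /xrise !nth_xseq_of_motzkin; try lia.
have hk1 : (k <= size m)%N by lia.
have [a1 a2 a3] := xm_spec hm n0 hk1.
have hk2 : (k.-1 <= size m)%N by lia.
have [b1 b2 b3] := xm_spec hm n0 hk2.
have e := nmrowS m k.-1; rewrite prednK in e; last lia.
case hr : (mrow m k); rewrite hr in e.
  by apply/negP => /eqP ex; move: a2 b2; rewrite ex; lia.
by rewrite /xm e addn0 eqxx.
Qed.

End MotzkinWords.

Section MotzkinOfXSequences.

Definition motzkin_letter n xs k : 'I_3 :=
  if is_xval n xs k && ~~ xrise xs k then inord 0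
  else if xrise xs k && ~~ is_xval n xs k then inord 1 else inord 2.
Definition motzkin_of_xseq n xs := map (motzkin_letter n xs) (iota 1 n).
Definition xseq_motzkin_cond n xs := all (fun k => [|| xrise xs k, is_xval n xs k |
   nth 0 xs (nbelow n xs k.+1) == nth 0 xs k.-1]) (iota 1 n).
Definition xseq_riordan_cond n xs := all (fun k => xrise xs k || is_xval n xs k) (iota 1 n).

Lemma nxval_motzkin m v : is_motzkin m -> (0 < size m)%N -> (v <= size m)%N ->
  nxval (size m) (xseq_of_motzkin m) v = nmcol m v.
Proof.
move=> hm n0 hv; apply: eq_in_count => u; rewrite mem_iota => hu.
apply: is_xval_motzkin => //; lia.
Qed.

Lemma nth_motzkin_of_xseq n xs i : (i < n)%N ->
  nth ord0 (motzkin_of_xseq n xs) i = motzkin_letter n xs i.+1.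
Proof. by move=> hi; rewrite (nth_map 0%N) ?size_iota ?nth_iota // add1n. Qed.

Lemma size_motzkin_of_xseq n xs : size (motzkin_of_xseq n xs) = n.
Proof. by rewrite size_map size_iota. Qed.

Lemma xseq_of_motzkinK m : is_motzkin m -> (0 < size m)%N ->
  [/\ is_xseq (size m) (xseq_of_motzkin m),
      xseq_motzkin_cond (size m) (xseq_of_motzkin m)
    & motzkin_of_xseq (size m) (xseq_of_motzkin m) = m].
Proof.
move=> hm n0; have hv := xseq_of_motzkin_valid hm n0.
have hcr : forall k, (0 < k <= size m)%N ->
    is_xval (size m) (xseq_of_motzkin m) k = mcol m k /\ xrise (xseq_of_motzkin m) k = mrow m k.
  by move=> k hk; rewrite is_xval_motzkin ?xrise_motzkin.
split => //.
  apply/allP => k; rewrite mem_iota => hk.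
  have hk' : (0 < k <= size m)%N by lia.
  have [-> ->] := hcr k hk'.
  case hr : (mrow m k) => //; case hc : (mcol m k) => //=.
  have [he hn] := motzkinP hm.
  have hH : pheight m k.-1 = 0.
    move: hr hc; rewrite /mrow /mcol; have := hn k.-1 (_ : (k.-1 <= size m)%N) => /(_ ltac:(lia)).
    move: (letter_lt m k); case: (letter m k) => [|[|[|?]]] //=; try lia.
  have hk1 : (k.-1 <= size m)%N by lia.
  have := pheight_count hk1; rewrite hH => hCR.
  rewrite x_nbelow_eqE //; last by rewrite is_xval_motzkin // hc.
  rewrite !nxval_motzkin //; last first.
    have [h1 _ _] := xm_spec hm n0 hk1; rewrite nth_xseq_of_motzkin //; lia.
  rewrite nth_xseq_of_motzkin //; have [_ -> _] := xm_spec hm n0 hk1; lia.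
apply: (@eq_from_nth _ ord0); first by rewrite size_motzkin_of_xseq.
move=> i; rewrite size_motzkin_of_xseq => hi; rewrite nth_motzkin_of_xseq // /motzkin_letter.
have hi1 : (0 < i.+1 <= size m)%N by lia.
have [-> ->] := hcr i.+1 hi1.
rewrite /mcol /mrow /letter /=.
case: (nth ord0 m i) => -[|[|[|?]]] //= p; try (apply: val_inj => /=; rewrite inordK //).
by case: (0 < pheight m i)%R; apply: val_inj => /=; rewrite inordK.
Qed.

Lemma letter_motzkin_of_xseq n xs k : (0 < k <= n)%N ->
  letter (motzkin_of_xseq n xs) k = if is_xval n xs k && ~~ xrise xs k then 0%N
                      else if xrise xs k && ~~ is_xval n xs k then 1%N else 2%N.
Proof.
move=> hk; rewrite /letter nth_motzkin_of_xseq; last lia.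
rewrite prednK; last lia.
by rewrite /motzkin_letter; case: (is_xval _ _ _); case: (xrise _ _) => /=; rewrite inordK.
Qed.

Section Decoding.

Variables (n : nat) (xs : seq nat).
Hypotheses (xsP : is_xseq n xs) (xs_cond : xseq_motzkin_cond n xs).
Local Notation m := (motzkin_of_xseq n xs).

Lemma mcol_mrow_motzkin_of_xseq j : (0 < j <= n)%N ->
  mcol m j = is_xval n xs j /\ mrow m j = xrise xs j.
Proof.
move=> hj; suff key k : (k <= n)%N -> forall i, (0 < i <= k)%N ->
    mcol m i = is_xval n xs i /\ mrow m i = xrise xs i.
  by apply: (key n) => //; lia.
elim: k {j hj} => [|k IH] hk j hj; first lia.
case: (ltnP j k.+1) => hjk; first by apply: IH; lia.
have -> : j = k.+1 by lia.
have eC : nmcol m k = nxval n xs k.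
  apply: eq_in_count => u; rewrite mem_iota => hu.
  by have [] := IH (ltnW hk) u (_ : (0 < u <= k)%N); first lia.
have eR : nmrow m k = nrise xs k.
  apply: eq_in_count => u; rewrite mem_iota => hu.
  by have [] := IH (ltnW hk) u (_ : (0 < u <= k)%N); first lia.
have hH : pheight m k = (Posz (nxval n xs k) - Posz (nrise xs k))%R.
  by rewrite pheight_count ?eC ?eR // size_motzkin_of_xseq ltnW.
have hk1 : (0 < k.+1 <= n)%N by lia.
rewrite /mcol /mrow letter_motzkin_of_xseq //= hH.
case hc : (is_xval n xs k.+1); case hr : (xrise xs k.+1) => //=.
  have := nxval_lt_rise xsP hk1 hr; rewrite /= nxval_x ?(ltnW hk) //; lia.
have := allP xs_cond k.+1; rewrite mem_iota hc hr /= => /(_ ltac:(lia)).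
rewrite x_nbelow_eqE //; last by rewrite hc.
by rewrite /= nxval_x ?(ltnW hk) // => /eqP ->; rewrite subrr.
Qed.

Lemma nmcol_motzkin_of_xseq v : (v <= n)%N -> nmcol m v = nxval n xs v.
Proof.
move=> hv; apply: eq_in_count => u; rewrite mem_iota => hu.
by have [] := mcol_mrow_motzkin_of_xseq (_ : (0 < u <= n)%N); first lia.
Qed.

Lemma nmrow_motzkin_of_xseq v : (v <= n)%N -> nmrow m v = nrise xs v.
Proof.
move=> hv; apply: eq_in_count => u; rewrite mem_iota => hu.
by have [] := mcol_mrow_motzkin_of_xseq (_ : (0 < u <= n)%N); first lia.
Qed.

Lemma pheight_motzkin_of_xseq k : (k <= n)%N ->
  pheight m k = (Posz (nxval n xs k) - Posz (nxval n xs (nth 0 xs k)))%R.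
Proof.
move=> hk; rewrite pheight_count ?size_motzkin_of_xseq // nxval_x //.
by rewrite nmcol_motzkin_of_xseq ?nmrow_motzkin_of_xseq.
Qed.

Lemma xseq_le k : (k <= n)%N -> (nth 0 xs k <= k)%N.
Proof.
have [x0 xlt _] := xsP; move=> hk; case: (posnP k) => [->|k0]; first by rewrite x0.
by apply: ltnW; apply: xlt; lia.
Qed.

Lemma pheight_motzkin_of_xseq_ge0 k : (k <= n)%N -> (0 <= pheight m k)%R.
Proof.
by move=> hk; rewrite pheight_motzkin_of_xseq // subr_ge0 lez_nat nxval_mono // xseq_le.
Qed.

Lemma motzkin_of_xseq_motzkin : is_motzkin m.
Proof.
apply/andP; split.
  have := pheight_motzkin_of_xseq (leqnn n); rewrite -(nxval_top xsP) subrr.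
  by rewrite /pheight -{1}(size_motzkin_of_xseq n xs) take_size => ->.
apply/allP => k; rewrite mem_iota size_motzkin_of_xseq => hk.
by apply: pheight_motzkin_of_xseq_ge0; lia.
Qed.

Lemma motzkin_of_xseqK : (0 < n)%N -> size xs = n.+1 -> xseq_of_motzkin m = xs.
Proof.
have [x0 xlt _] := xsP; move=> n0 hs.
have xltn k : (k <= n)%N -> (nth 0 xs k < n)%N.
  move=> hk; case: (posnP k) => [->|k0]; first by rewrite x0.
  by have := xlt k; lia.
apply: (@eq_from_nth _ 0%N); first by rewrite size_map size_iota size_motzkin_of_xseq hs.
move=> k; rewrite size_map size_iota size_motzkin_of_xseq => hk.
have hkn : (k <= n)%N by lia.
rewrite nth_xseq_of_motzkin ?size_motzkin_of_xseq // /xm size_motzkin_of_xseq.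
apply: find_iota_eq; first exact: xltn.
  by rewrite nmrow_motzkin_of_xseq // nmcol_motzkin_of_xseq ?nxval_x // ltnW ?xltn.
move=> u hu; rewrite -ltnNge nmrow_motzkin_of_xseq // nmcol_motzkin_of_xseq; last first.
  by apply: ltnW; apply: leq_trans (xltn k hkn); apply: ltnW.
rewrite -(nxval_x xsP hkn).
have k0 : (0 < k)%N by case: (posnP k) hu => // ->; rewrite x0.
rewrite (nxval_val (v := nth 0 xs k)); [|lia|apply: is_xval_x; lia].
by rewrite ltnS nxval_mono //; lia.
Qed.

Lemma riordan_motzkin_of_xseq : is_riordan m = xseq_riordan_cond n xs.
Proof.
rewrite /is_riordan motzkin_of_xseq_motzkin /= /xseq_riordan_cond size_motzkin_of_xseq.
rewrite (_ : iota 1 n = map succn (iota 0 n)); last by rewrite -(addn0 1) iotaDl.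
rewrite all_map; apply: eq_in_all => i; rewrite mem_iota => hi /=.
have hi1 : (0 < i.+1 <= n)%N by lia.
have [hc hr] := mcol_mrow_motzkin_of_xseq hi1.
have := pheight_motzkin_of_xseq_ge0 (ltnW (proj2 (andP hi1))).
move: hc hr; rewrite /mcol /mrow letter_motzkin_of_xseq; last lia.
rewrite nth_motzkin_of_xseq; last lia; rewrite /motzkin_letter -/(pheight m i).
case: (is_xval n xs i.+1); case: (xrise xs i.+1) => /=; rewrite ?inordK //=.
- by move=> H _ _; move: H; rewrite lt0r => /andP [].
- move=> H _ H2; apply/negbTE; rewrite negbK; apply/eqP.
  by move: H; rewrite lt0r H2 andbT => /negbT; rewrite negbK => /eqP.
Qed.

End Decoding.

End MotzkinOfXSequences.

Section DyckWordsAsXSequences.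

Definition xseq_of_dyck n (t : seq bool) := map (xcoord t) (iota 0 n.+1).
Definition north_positions n (xs : seq nat) : seq nat :=
  [seq k.-1 + nth 0 xs k | k <- iota 1 n].
Definition dyck_of_xseq n xs : seq bool :=
  [seq i \in north_positions n xs | i <- iota 0 (2 * n)].

Lemma nth_xseq_of_dyck n t k : k <= n -> nth 0 (xseq_of_dyck n t) k = xcoord t k.
Proof. by move=> hk; rewrite (nth_map 0) ?size_iota ?nth_iota //; lia. Qed.

(* [kth_pos] reads index [k.-1], so [xcoord t 0] is [xcoord t 1]. *)
Lemma xseq_of_dyck_valid n t : is_dyck n t -> 0 < n -> is_xseq n (xseq_of_dyck n t).
Proof.
move=> hd n0; split.
- rewrite nth_xseq_of_dyck //; have h1 : 0 < 1 <= n by lia.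
  have := xcoord_lt hd h1; change (xcoord t 0) with (xcoord t 1); lia.
- by move=> k hk; rewrite nth_xseq_of_dyck; [apply: xcoord_lt hd hk | lia].
- move=> k hk; rewrite !nth_xseq_of_dyck //; try lia.
  case: (posnP k) => [->|k0]; first by change (xcoord t 0) with (xcoord t 1).
  by apply: (xcoord_mono hd) => //; lia.
Qed.

Lemma ycoord_nbelow n t i : is_dyck n t -> 0 < i <= n ->
  ycoord t i = nbelow n (xseq_of_dyck n t) i.
Proof.
move=> hd hi; rewrite (ycoordE hd hi); apply: eq_in_count => j.
by rewrite mem_iota => hj /=; rewrite nth_xseq_of_dyck //; lia.
Qed.

Lemma careaE n t k : is_dyck n t -> 0 < n -> 0 < k <= n.+1 ->
  carea n t k = ((nbelow n (xseq_of_dyck n t) k)%:Z - k%:Z)%R.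
Proof.
move=> hd n0 hk; rewrite /carea.
case: ifP => h; first by rewrite (ycoord_nbelow hd); lia.
have -> : k = n.+1 by lia.
rewrite nbelow_top; last exact: xseq_of_dyck_valid.
by rewrite -addn1 PoszD opprD addrA subrr add0r.
Qed.

Lemma inNE n t k : is_dyck n t -> 0 < k <= n -> inN t k = ~~ xrise (xseq_of_dyck n t) k.
Proof.
move=> hd hk; rewrite /inN (row_has_valleyE hd hk) /xrise !nth_xseq_of_dyck //; lia.
Qed.

Lemma inDE n t k : is_dyck n t -> 0 < n -> 0 < k <= n ->
  inD n t k = ~~ is_xval n (xseq_of_dyck n t) k.
Proof.
move=> hd n0 hk; rewrite /inD !careaE //; try lia.
rewrite nbelowS /is_xval has_count.
case: (count _ _) => [|c]; lia.
Qed.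

Lemma inFE n t k : is_dyck n t -> 0 < n -> 0 < k <= n ->
  inF n t k = (nth 0 (xseq_of_dyck n t) (nbelow n (xseq_of_dyck n t) k.+1)
               == nth 0 (xseq_of_dyck n t) k.-1).
Proof.
move=> hd n0 hk; have hv := xseq_of_dyck_valid hd n0; have [h0 hl hm] := hv.
rewrite /inF careaE //; last lia.
set Y := nbelow n (xseq_of_dyck n t) k.+1.
have Y1 : 1 <= Y by rewrite -(xseq_lt_nbelow _ hv) ?h0 //; have := hl 1; lia.
have Yn : Y <= n by apply: nbelow_le.
rewrite (addrC (Posz k.+1)) subrK /=.
rewrite (nth_xseq_of_dyck t Yn).
case: Y Y1 Yn => [//|Y'] _ Yn.
have hk1 : k.-1 <= n by lia.
rewrite (nth_xseq_of_dyck t hk1) /rarea.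
case: k hk {hk1} => [//|[|k']] hk /=.
  have hx0 : xcoord t 0 = 0 by rewrite -(nth_xseq_of_dyck t (leq0n n)).
  rewrite hx0; apply/eqP/eqP => h; lia.
apply/eqP/eqP => h; lia.
Qed.


Lemma size_dyck_of_xseq n xs : size (dyck_of_xseq n xs) = 2 * n.
Proof. by rewrite size_map size_iota. Qed.

Lemma nth_dyck_of_xseq n xs i : i < 2 * n ->
  nth false (dyck_of_xseq n xs) i = (i \in north_positions n xs).
Proof. by move=> hi; rewrite (nth_map 0) ?size_iota // nth_iota. Qed.

Lemma xseq_of_dyckK n t : is_dyck n t -> 0 < n -> dyck_of_xseq n (xseq_of_dyck n t) = t.
Proof.
move=> hd n0; have [hs _ _ _] := dyckP hd.
apply: (@eq_from_nth _ false); first by rewrite size_dyck_of_xseq hs.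
move=> i; rewrite size_dyck_of_xseq => hi; rewrite nth_dyck_of_xseq //.
have -> : north_positions n (xseq_of_dyck n t) = positions true t.
  rewrite (positions_true_dyck hd); apply/eq_in_map => k; rewrite mem_iota => hk.
  rewrite nth_xseq_of_dyck; last lia.
  have hk' : 0 < k <= n by lia.
  by have [_ _ _ ->] := north_step_spec hd hk'.
by rewrite mem_positions hs hi /=; case: (nth false t i).
Qed.

Lemma leq_min_double_count n i :
  minn (2 * n) i <= 2 * count (fun k => 2 * k - 2 < i) (iota 1 n).
Proof.
elim: n => [|n IH]; first by rewrite minnC.
rewrite count_iota1S; case: (ltnP (2 * n) i) => h.
  have -> : (2 * n.+1 - 2 < i) = true by apply/idP; lia.
  move: IH; rewrite /=; lia.
have -> : (2 * n.+1 - 2 < i) = false by apply/negbTE; lia.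
move: IH; rewrite /=; lia.
Qed.

Section Encoding.

Variables (n : nat) (xs : seq nat).
Hypotheses (xsP : is_xseq n xs) (n_gt0 : 0 < n).
Local Notation w := (dyck_of_xseq n xs).

Lemma positions_dyck_of_xseq : positions true w = north_positions n xs.
Proof.
have [_ xlt xle] := xsP.
have sorted_north : sorted ltn (north_positions n xs).
  rewrite sorted_map -(prednK n_gt0) /=.
  by apply: path_iota_rel => k hk hk' /=; have := xle k; lia.
apply: (irr_sorted_eq ltn_trans ltnn (sorted_positions true w) sorted_north) => i.
rewrite mem_positions size_dyck_of_xseq.
case: (ltnP i (2 * n)) => hi /=; first by rewrite nth_dyck_of_xseq //; case: (_ \in _).
apply/esym/negbTE/mapP => -[k]; rewrite mem_iota => hk ei.
by move: hi; rewrite ei; have := xlt k; lia.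
Qed.

Lemma nth_north_positions k : 0 < k <= n ->
  nth 0 (north_positions n xs) k.-1 = k.-1 + nth 0 xs k.
Proof. by move=> hk; rewrite (nth_map 0) ?size_iota ?nth_iota ?add1n ?prednK //; lia. Qed.

Lemma xcoord_dyck_of_xseq k : 0 < k <= n -> xcoord w k = nth 0 xs k.
Proof.
move=> hk.
have hj : k.-1 < size (positions true w).
  by rewrite positions_dyck_of_xseq size_map size_iota; lia.
have [p1 _ p3] := nth_positions hj.
move: p1 p3; rewrite positions_dyck_of_xseq nth_north_positions // => p1 p3.
have := count_true_false (take (k.-1 + nth 0 xs k) w); rewrite size_take p1 p3.
by rewrite /xcoord kth_posE positions_dyck_of_xseq nth_north_positions //; lia.
Qed.

(* The [k]-th north step comes after at most [2k - 2] letters, so any prefix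
   of length [i] holds at least [min (2n) i / 2] north steps. *)
Lemma dyck_of_xseq_dyck : is_dyck n w.
Proof.
have [_ xlt _] := xsP.
apply/and3P; split; first by rewrite size_dyck_of_xseq.
  by rewrite -size_positions positions_dyck_of_xseq size_map size_iota.
apply/allP => i; rewrite mem_iota size_dyck_of_xseq add0n ltnS => hi.
have ct := count_take_positions true w i.
rewrite positions_dyck_of_xseq count_map in ct.
have st : size (take i w) = i.
  by rewrite size_take size_dyck_of_xseq; case: ltnP => //; lia.
have := count_true_false (take i w); rewrite st.
have := leq_min_double_count n i.
have : count (fun k => 2 * k - 2 < i) (iota 1 n) <=
       count (preim (fun k => k.-1 + nth 0 xs k) (fun p => p < i)) (iota 1 n).
  by apply: sub_in_count => k; rewrite mem_iota => hk /=; have := xlt k; lia.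
rewrite -ct; move: (count _ (iota 1 n)) (count_mem true (take i w)) (count_mem false (take i w)).
lia.
Qed.

Lemma dyck_of_xseqK : size xs = n.+1 -> xseq_of_dyck n w = xs.
Proof.
have [x0 xlt _] := xsP; move=> hs.
apply: (@eq_from_nth _ 0); first by rewrite size_map size_iota hs.
move=> k; rewrite size_map size_iota => hk; rewrite nth_xseq_of_dyck //.
case: (posnP k) => [->|k0]; last by apply: xcoord_dyck_of_xseq; lia.
change (xcoord w 0) with (xcoord w 1); rewrite xcoord_dyck_of_xseq; last lia.
by rewrite x0; have := xlt 1; lia.
Qed.

End Encoding.

End DyckWordsAsXSequences.

Section Counting.

Lemma dyck_motzkin_condE n t : is_dyck n t -> 0 < n ->
  all (fun k => (inN t k && inD n t k) ==> inF n t k) (iota 1 n)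
  = xseq_motzkin_cond n (xseq_of_dyck n t).
Proof.
move=> hd n0; apply: eq_in_all => k; rewrite mem_iota => hk.
have hk' : 0 < k <= n by lia.
rewrite (inNE hd hk') (inDE hd n0 hk') (inFE hd n0 hk').
by case: (xrise _ _); case: (is_xval _ _ _).
Qed.

Lemma dyck_riordan_condE n t : is_dyck n t -> 0 < n ->
  all (fun k => ~~ (inN t k && inD n t k)) (iota 1 n)
  = xseq_riordan_cond n (xseq_of_dyck n t).
Proof.
move=> hd n0; apply: eq_in_all => k; rewrite mem_iota => hk.
have hk' : 0 < k <= n by lia.
rewrite (inNE hd hk') (inDE hd n0 hk').
by case: (xrise _ _); case: (is_xval _ _ _).
Qed.

Lemma riordan_cond_motzkin_cond n xs :
  xseq_riordan_cond n xs -> xseq_motzkin_cond n xs.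
Proof. by move/allP => h; apply/allP => k /h /orP [] ->; rewrite ?orbT. Qed.

Definition motzkin_of_dyck n (t : seq bool) : seq 'I_3 :=
  motzkin_of_xseq n (xseq_of_dyck n t).

Definition dyck_of_motzkin n (m : seq 'I_3) : seq bool :=
  dyck_of_xseq n (xseq_of_motzkin m).

Lemma motzkin_of_dyckK n t : 0 < n -> is_dyck n t ->
  xseq_motzkin_cond n (xseq_of_dyck n t) ->
  [/\ is_motzkin (motzkin_of_dyck n t), dyck_of_motzkin n (motzkin_of_dyck n t) = t
    & is_riordan (motzkin_of_dyck n t) = xseq_riordan_cond n (xseq_of_dyck n t)].
Proof.
move=> n0 hd hA; have hv := xseq_of_dyck_valid hd n0.
have sx : size (xseq_of_dyck n t) = n.+1 by rewrite size_map size_iota.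
rewrite /dyck_of_motzkin /motzkin_of_dyck motzkin_of_xseqK // xseq_of_dyckK //.
by rewrite motzkin_of_xseq_motzkin ?riordan_motzkin_of_xseq.
Qed.

Lemma dyck_of_motzkinK n m : 0 < n -> size m = n -> is_motzkin m ->
  [/\ is_dyck n (dyck_of_motzkin n m),
      xseq_motzkin_cond n (xseq_of_dyck n (dyck_of_motzkin n m)),
      motzkin_of_dyck n (dyck_of_motzkin n m) = m
    & xseq_riordan_cond n (xseq_of_dyck n (dyck_of_motzkin n m)) = is_riordan m].
Proof.
move=> n0 sm hm; have m0 : 0 < size m by rewrite sm.
have [hv hA mK] := xseq_of_motzkinK hm m0; rewrite sm in hv hA mK.
have sx : size (xseq_of_motzkin m) = n.+1 by rewrite size_map size_iota sm.
have hd := dyck_of_xseq_dyck hv n0.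
rewrite /motzkin_of_dyck /dyck_of_motzkin dyck_of_xseqK // mK; split => //.
by rewrite -(riordan_motzkin_of_xseq hv hA) mK.
Qed.

Definition motzkin_tuple_of_dyck n (t : (2 * n).-tuple bool) : n.-tuple 'I_3 :=
  [tuple nth ord0 (motzkin_of_dyck n t) i | i < n].

Definition dyck_tuple_of_motzkin n (m : n.-tuple 'I_3) : (2 * n).-tuple bool :=
  [tuple nth false (dyck_of_motzkin n m) i | i < 2 * n].

Lemma val_motzkin_tuple_of_dyck n (t : (2 * n).-tuple bool) :
  val (motzkin_tuple_of_dyck t) = motzkin_of_dyck n t.
Proof. by rewrite val_mktuple_nth ?size_motzkin_of_xseq. Qed.

Lemma val_dyck_tuple_of_motzkin n (m : n.-tuple 'I_3) :
  val (dyck_tuple_of_motzkin m) = dyck_of_motzkin n m.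
Proof. by rewrite val_mktuple_nth ?size_dyck_of_xseq. Qed.

End Counting.

Theorem mainTheorem7 (n : nat) (hn : (1 <= n)%N) :
  #|[pred t : (2 * n).-tuple bool | is_dyck n t &&
      all (fun k => (inN t k && inD n t k) ==> inF n t k) (iota 1 n)]|
    = #|[pred t : n.-tuple 'I_3 | is_motzkin t]|
  /\
  #|[pred t : (2 * n).-tuple bool | is_dyck n t &&
      all (fun k => ~~ (inN t k && inD n t k)) (iota 1 n)]|
    = #|[pred t : n.-tuple 'I_3 | is_riordan t]|.
Proof.
have tK (t : (2 * n).-tuple bool) : dyck_of_motzkin n (motzkin_of_dyck n t) = t ->
    dyck_tuple_of_motzkin (motzkin_tuple_of_dyck t) = t.
  by move=> e; apply: val_inj; rewrite val_dyck_tuple_of_motzkin val_motzkin_tuple_of_dyck.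
have mK (m : n.-tuple 'I_3) : motzkin_of_dyck n (dyck_of_motzkin n m) = m ->
    motzkin_tuple_of_dyck (dyck_tuple_of_motzkin m) = m.
  by move=> e; apply: val_inj; rewrite val_motzkin_tuple_of_dyck val_dyck_tuple_of_motzkin.
split; apply: (eq_card_cancel_on (f := @motzkin_tuple_of_dyck n) (g := @dyck_tuple_of_motzkin n)).
- move=> t /andP [hd]; rewrite (dyck_motzkin_condE hd hn) => hA.
  have [hm dK _] := motzkin_of_dyckK hn hd hA.
  by rewrite inE val_motzkin_tuple_of_dyck tK.
- move=> m; rewrite inE => hm; have [hd hA dK _] := dyck_of_motzkinK hn (size_tuple m) hm.
  by rewrite inE val_dyck_tuple_of_motzkin hd (dyck_motzkin_condE hd hn) mK.
- move=> t /andP [hd]; rewrite (dyck_riordan_condE hd hn) => hB.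
  have [hm dK hr] := motzkin_of_dyckK hn hd (riordan_cond_motzkin_cond hB).
  by rewrite inE val_motzkin_tuple_of_dyck tK // hr.
- move=> m; rewrite inE => hr; have hm : is_motzkin m by case/andP: hr.
  have [hd _ dK hrE] := dyck_of_motzkinK hn (size_tuple m) hm.
  by rewrite inE val_dyck_tuple_of_motzkin hd (dyck_riordan_condE hd hn) hrE mK.
Qed.
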